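(* Let $k\in\{3,4,5,6\}$ and let $\widehat p_0,\dots,\widehat p_4$ be a normalized configuration of 5 distinct points on $S^2$ minimizing $\sum_{i<j}(4-\|\widehat p_i-\widehat p_j\|^2)^k$ among all 5-point configurations on $S^2$. Let $p_i=\Sigma(\widehat p_i)\in\mathbb{R}^2$ for $i=0,1,2,3$. Then $|p_0|<4$ and $|p_i|<3/2$ for $i=1,2,3$.
   Context: $\Sigma(x,y,z)=(x/(1-z),y/(1-z))$ is stereographic projection from $(0,0,1)$. A configuration $\widehat p_0,\dots,\widehat p_4$ is normalized if $\widehat p_4=(0,0,1)$ and $\|\widehat p_4-\widehat p_0\|\le\|\widehat p_4-\widehat p_i\|$ for $i=1,2,3$. *)

From Stdlib Require Import Reals Lra.
Open Scope R_scope.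

Definition pt3 : Type := (R * R * R)%type.

Definition px (p : pt3) : R := fst (fst p).
Definition py (p : pt3) : R := snd (fst p).
Definition pz (p : pt3) : R := snd p.

Definition dist2 (p q : pt3) : R :=
  (px p - px q)^2 + (py p - py q)^2 + (pz p - pz q)^2.

Definition dist3 (p q : pt3) : R := sqrt (dist2 p q).

Definition on_sphere (p : pt3) : Prop := px p ^ 2 + py p ^ 2 + pz p ^ 2 = 1.

Definition north : pt3 := (0, 0, 1).

(* A 5-point configuration: indices 0..4 *)
Definition config : Type := nat -> pt3.

Definition config_on_sphere (P : config) : Prop :=
  forall i, (i < 5)%nat -> on_sphere (P i).

Definition distinct5 (P : config) : Prop :=
  forall i j, (i < 5)%nat -> (j < 5)%nat -> i <> j -> P i <> P j.

Definition energy (k : nat) (P : config) : R :=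
  sum_f_R0 (fun i =>
    sum_f_R0 (fun j =>
      if Nat.ltb i j then (4 - dist2 (P i) (P j)) ^ k else 0) 4) 4.

Definition normalized (P : config) : Prop :=
  P 4%nat = north /\
  forall i, (1 <= i <= 3)%nat -> dist3 (P 4%nat) (P 0%nat) <= dist3 (P 4%nat) (P i).

Definition stereo (p : pt3) : R * R :=
  (px p / (1 - pz p), py p / (1 - pz p)).

Definition norm2 (v : R * R) : R := sqrt (fst v ^ 2 + snd v ^ 2).

(* The triangular bipyramid (an equilateral triangle on the equator plus both
   poles) has energy 6 * 2^k + 3, which bounds the energy of a minimizer.  All
   weights 4 - |p_i - p_j|^2 are nonnegative, the weight of p_i towards the north
   pole p_4 is 2 + 2 z_i, and |Sigma(p)|^2 = (1 + z)/(1 - z).  If |Sigma(p_0)| >= 4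
   then z_0 >= 15/17 and this single weight raised to k already exceeds the bound.
   If |Sigma(p_i)| >= 3/2 for some i >= 1, then z_0 >= z_i >= 5/13 by
   normalization, so two weights are at least 36/13: for k >= 4 these two terms
   suffice, and for k = 3 one adds the tangent line of x^3 at the mean weight 3/2,
   the weights summing to at least 15 because |p_0 + ... + p_4|^2 >= 0. *)

From Stdlib Require Import Reals Lra Lia Psatz.
Open Scope R_scope.

Lemma dist2_nonneg p q : 0 <= dist2 p q.
Proof.
  unfold dist2; pose proof (pow2_ge_0 (px p - px q));
  pose proof (pow2_ge_0 (py p - py q)); pose proof (pow2_ge_0 (pz p - pz q)); lra.
Qed.

Lemma dist2_sym p q : dist2 p q = dist2 q p.
Proof. unfold dist2; ring. Qed.

Lemma dist2_le_4 p q : on_sphere p -> on_sphere q -> dist2 p q <= 4.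
Proof.
  unfold on_sphere, dist2; intros Hp Hq.
  pose proof (pow2_ge_0 (px p + px q)); pose proof (pow2_ge_0 (py p + py q));
  pose proof (pow2_ge_0 (pz p + pz q)); nra.
Qed.

Lemma dist2_north p : on_sphere p -> dist2 north p = 2 - 2 * pz p.
Proof. unfold on_sphere, dist2, north, px, py, pz; simpl; intros; nra. Qed.

Lemma dist2_le_of_dist3_le p q r : dist3 p q <= dist3 p r -> dist2 p q <= dist2 p r.
Proof. apply sqrt_le_0; apply dist2_nonneg. Qed.

Lemma norm2_stereo_sphere p : on_sphere p -> pz p < 1 ->
  norm2 (stereo p) = sqrt ((1 + pz p) / (1 - pz p)).
Proof.
  destruct p as [[x y] z]; unfold on_sphere, norm2, stereo, px, py, pz; simpl; intros Hs Hz.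
  f_equal.
  transitivity ((x ^ 2 + y ^ 2) / (1 - z) ^ 2); [field; lra|].
  replace (x ^ 2 + y ^ 2) with ((1 - z) * (1 + z)) by lra. field; lra.
Qed.

Lemma norm2_stereo_lt p b : on_sphere p -> 0 < b -> pz p < (b ^ 2 - 1) / (b ^ 2 + 1) ->
  norm2 (stereo p) < b.
Proof.
  intros Hs Hb Hz.
  assert (Hb2 : 0 < b ^ 2 + 1) by nra.
  assert (Hlt : 1 + pz p < b ^ 2 * (1 - pz p)).
  { apply (Rmult_lt_compat_r (b ^ 2 + 1)) in Hz; [|lra].
    unfold Rdiv in Hz; rewrite Rmult_assoc, Rinv_l in Hz; lra. }
  assert (H1 : pz p < 1) by nra.
  assert (Hm1 : -1 <= pz p).
  { unfold on_sphere in Hs; pose proof (pow2_ge_0 (px p)); pose proof (pow2_ge_0 (py p)); nra. }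
  rewrite norm2_stereo_sphere by assumption.
  rewrite <- (sqrt_pow2 b) by lra.
  apply sqrt_lt_1_alt; split.
  - unfold Rdiv; apply Rmult_le_pos; [lra | left; apply Rinv_0_lt_compat; lra].
  - apply (Rmult_lt_reg_r (1 - pz p)); [lra|].
    unfold Rdiv; rewrite Rmult_assoc, Rinv_l; lra.
Qed.

Definition pair_sum (f : nat -> nat -> R) : R :=
  sum_f_R0 (fun i => sum_f_R0 (fun j => if Nat.ltb i j then f i j else 0) 4) 4.

Lemma energy_pair_sum k P : energy k P = pair_sum (fun i j => (4 - dist2 (P i) (P j)) ^ k).
Proof. reflexivity. Qed.

Lemma pair_sum_expand f : pair_sum f =
  f 0%nat 1%nat + f 0%nat 2%nat + f 0%nat 3%nat + f 0%nat 4%nat + f 1%nat 2%nat +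
  f 1%nat 3%nat + f 1%nat 4%nat + f 2%nat 3%nat + f 2%nat 4%nat + f 3%nat 4%nat.
Proof. unfold pair_sum; simpl; ring. Qed.

Lemma pair_sum_ext f g : (forall i j, f i j = g i j) -> pair_sum f = pair_sum g.
Proof. intros H; rewrite !pair_sum_expand, !H; reflexivity. Qed.

Lemma pair_sum_plus f g : pair_sum (fun i j => f i j + g i j) = pair_sum f + pair_sum g.
Proof. rewrite !pair_sum_expand; ring. Qed.

Lemma pair_sum_scal c f : pair_sum (fun i j => c * f i j) = c * pair_sum f.
Proof. rewrite !pair_sum_expand; ring. Qed.

Lemma pair_sum_const c : pair_sum (fun _ _ => c) = 10 * c.
Proof. rewrite pair_sum_expand; ring. Qed.

Lemma pair_sum_ge_two f i :
  (forall m n, (m < n <= 4)%nat -> 0 <= f m n) -> (1 <= i <= 3)%nat ->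
  f 0%nat 4%nat + f i 4%nat <= pair_sum f.
Proof.
  intros Hf Hi; rewrite pair_sum_expand.
  pose proof (Hf 0%nat 1%nat ltac:(lia)); pose proof (Hf 0%nat 2%nat ltac:(lia));
  pose proof (Hf 0%nat 3%nat ltac:(lia)); pose proof (Hf 1%nat 2%nat ltac:(lia));
  pose proof (Hf 1%nat 3%nat ltac:(lia)); pose proof (Hf 1%nat 4%nat ltac:(lia));
  pose proof (Hf 2%nat 3%nat ltac:(lia)); pose proof (Hf 2%nat 4%nat ltac:(lia));
  pose proof (Hf 3%nat 4%nat ltac:(lia)).
  assert (i = 1 \/ i = 2 \/ i = 3)%nat as [-> | [-> | ->]] by lia; lra.
Qed.

Lemma pair_sum_dist2_le_25 P : config_on_sphere P ->
  pair_sum (fun i j => dist2 (P i) (P j)) <= 25.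
Proof.
  intros H; rewrite pair_sum_expand.
  pose proof (H 0%nat ltac:(lia)) as H0; pose proof (H 1%nat ltac:(lia)) as H1;
  pose proof (H 2%nat ltac:(lia)) as H2; pose proof (H 3%nat ltac:(lia)) as H3;
  pose proof (H 4%nat ltac:(lia)) as H4; revert H0 H1 H2 H3 H4.
  destruct (P 0%nat) as [[x0 y0] z0], (P 1%nat) as [[x1 y1] z1], (P 2%nat) as [[x2 y2] z2],
    (P 3%nat) as [[x3 y3] z3], (P 4%nat) as [[x4 y4] z4].
  unfold on_sphere, dist2, px, py, pz; simpl; intros.
  pose proof (pow2_ge_0 (x0 + x1 + x2 + x3 + x4));
  pose proof (pow2_ge_0 (y0 + y1 + y2 + y3 + y4));
  pose proof (pow2_ge_0 (z0 + z1 + z2 + z3 + z4)); nra.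
Qed.

Definition triangular_bipyramid : config := fun i =>
  match i with
  | 0%nat => (1, 0, 0)
  | 1%nat => (-1/2, sqrt 3 / 2, 0)
  | 2%nat => (-1/2, -(sqrt 3 / 2), 0)
  | 3%nat => (0, 0, -1)
  | _ => north
  end.

Lemma triangular_bipyramid_on_sphere : config_on_sphere triangular_bipyramid.
Proof.
  pose proof (sqrt_sqrt 3 ltac:(lra)).
  intros i Hi; unfold on_sphere, triangular_bipyramid, north, px, py, pz.
  destruct i as [|[|[|[|[|i]]]]]; simpl; try nra; lia.
Qed.

Lemma energy_triangular_bipyramid k : (1 <= k)%nat ->
  energy k triangular_bipyramid = 6 * 2 ^ k + 3.
Proof.
  intros Hk; pose proof (sqrt_sqrt 3 ltac:(lra)).
  rewrite energy_pair_sum, pair_sum_expand.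
  unfold triangular_bipyramid, north, dist2, px, py, pz; simpl.
  repeat match goal with |- context [(4 - ?e) ^ k] =>
    let v := fresh in
    first [assert (v : e = 3) by nra | assert (v : e = 2) by nra | assert (v : e = 4) by nra];
    rewrite v; clear v end.
  replace (4 - 3) with 1 by ring; replace (4 - 2) with 2 by ring; replace (4 - 4) with 0 by ring.
  rewrite pow1, pow_i by lia; ring.
Qed.

Lemma sphere_pair_weight_nonneg P i j : config_on_sphere P -> (i < 5)%nat -> (j < 5)%nat ->
  0 <= 4 - dist2 (P i) (P j).
Proof. intros Hs Hi Hj; pose proof (dist2_le_4 _ _ (Hs i Hi) (Hs j Hj)); lra. Qed.

Lemma energy_ge_pole_terms k P i : config_on_sphere P -> (1 <= i <= 3)%nat ->
  (4 - dist2 (P 0%nat) (P 4%nat)) ^ k + (4 - dist2 (P i) (P 4%nat)) ^ k <= energy k P.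
Proof.
  intros Hs Hi; rewrite energy_pair_sum.
  apply (pair_sum_ge_two (fun m n => (4 - dist2 (P m) (P n)) ^ k)); [|assumption].
  intros m n Hmn; apply pow_le, sphere_pair_weight_nonneg; [assumption | lia | lia].
Qed.

Lemma cube_tangent_decomp x : x ^ 3 = 27/4 * x + -(27/4) + (x - 3/2) ^ 2 * (x + 3).
Proof. field. Qed.

Lemma energy3_gt_of_two_near_pole P i : config_on_sphere P -> (1 <= i <= 3)%nat ->
  36/13 <= 4 - dist2 (P 0%nat) (P 4%nat) -> 36/13 <= 4 - dist2 (P i) (P 4%nat) ->
  51 < energy 3 P.
Proof.
  intros Hs Hi H0 Hi4.
  set (a := fun m n => 4 - dist2 (P m) (P n)).
  set (excess := fun x => (x - 3/2) ^ 2 * (x + 3)).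
  assert (Hsum : 15 <= pair_sum a).
  { pose proof (pair_sum_dist2_le_25 P Hs) as H25.
    unfold a; rewrite pair_sum_expand in *; lra. }
  assert (Hexcess :
    excess (a 0%nat 4%nat) + excess (a i 4%nat) <= pair_sum (fun m n => excess (a m n))).
  { apply (pair_sum_ge_two (fun m n => excess (a m n))); [|assumption].
    intros m n Hmn; unfold excess.
    pose proof (sphere_pair_weight_nonneg P m n Hs ltac:(lia) ltac:(lia)).
    apply Rmult_le_pos; [apply pow2_ge_0 | unfold a; lra]. }
  assert (Hfar : forall x, 36/13 <= x -> (33/26) ^ 2 * (75/13) <= excess x).
  { intros x Hx; unfold excess.
    apply Rmult_le_compat; [lra | lra | apply pow_incr; lra | lra]. }
  rewrite energy_pair_sum.
  rewrite (pair_sum_ext _ (fun m n => 27/4 * a m n + -(27/4) + excess (a m n)))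
    by (intros; apply cube_tangent_decomp).
  rewrite !pair_sum_plus, pair_sum_scal, pair_sum_const.
  pose proof (Hfar (a 0%nat 4%nat) H0); pose proof (Hfar (a i 4%nat) Hi4); lra.
Qed.

Lemma energy_gt_of_near_pole k P : (3 <= k <= 6)%nat -> config_on_sphere P ->
  64/17 <= 4 - dist2 (P 0%nat) (P 4%nat) -> 6 * 2 ^ k + 3 < energy k P.
Proof.
  intros Hk Hs H0.
  pose proof (energy_ge_pole_terms k P 1 Hs ltac:(lia)).
  pose proof (pow_le _ k (sphere_pair_weight_nonneg P 1 4 Hs ltac:(lia) ltac:(lia))).
  pose proof (pow_incr (64/17) (4 - dist2 (P 0%nat) (P 4%nat)) k ltac:(lra)).
  assert (6 * 2 ^ k + 3 < (64/17) ^ k)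
    by (assert (k = 3 \/ k = 4 \/ k = 5 \/ k = 6)%nat as [-> | [-> | [-> | ->]]] by lia;
        simpl; lra).
  lra.
Qed.

Lemma energy_gt_of_two_near_pole k P i : (3 <= k <= 6)%nat -> config_on_sphere P ->
  (1 <= i <= 3)%nat ->
  36/13 <= 4 - dist2 (P 0%nat) (P 4%nat) -> 36/13 <= 4 - dist2 (P i) (P 4%nat) ->
  6 * 2 ^ k + 3 < energy k P.
Proof.
  intros Hk Hs Hi H0 Hi4.
  destruct (Nat.eq_dec k 3) as [-> | Hk3].
  - pose proof (energy3_gt_of_two_near_pole P i Hs Hi H0 Hi4); simpl; lra.
  - pose proof (energy_ge_pole_terms k P i Hs Hi).
    pose proof (pow_incr (36/13) (4 - dist2 (P 0%nat) (P 4%nat)) k ltac:(lra)).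
    pose proof (pow_incr (36/13) (4 - dist2 (P i) (P 4%nat)) k ltac:(lra)).
    assert (6 * 2 ^ k + 3 < 2 * (36/13) ^ k)
      by (assert (k = 4 \/ k = 5 \/ k = 6)%nat as [-> | [-> | ->]] by lia; simpl; lra).
    lra.
Qed.

Theorem lemma2p2 (k : nat) (P : config) :
  (3 <= k <= 6)%nat ->
  config_on_sphere P ->
  distinct5 P ->
  normalized P ->
  (forall Q : config, config_on_sphere Q -> energy k P <= energy k Q) ->
  norm2 (stereo (P 0%nat)) < 4 /\
  (forall i, (1 <= i <= 3)%nat -> norm2 (stereo (P i)) < 3 / 2).
Proof.
  intros Hk Hs _ [H4 Hn] Hmin.
  pose proof (Hmin _ triangular_bipyramid_on_sphere) as Hopt.
  rewrite energy_triangular_bipyramid in Hopt by lia.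
  assert (Hweight : forall i, (i < 4)%nat -> 4 - dist2 (P i) (P 4%nat) = 2 + 2 * pz (P i)).
  { intros i Hi; rewrite dist2_sym, H4, dist2_north by (apply Hs; lia); ring. }
  assert (Hclosest : forall i, (1 <= i <= 3)%nat -> pz (P i) <= pz (P 0%nat)).
  { intros i Hi; pose proof (dist2_le_of_dist3_le _ _ _ (Hn i Hi)) as Hle.
    rewrite !(dist2_sym (P 4%nat)) in Hle.
    pose proof (Hweight 0%nat ltac:(lia)); pose proof (Hweight i ltac:(lia)); lra. }
  split.
  - apply norm2_stereo_lt; [apply Hs; lia | lra |].
    destruct (Rlt_or_le (pz (P 0%nat)) (15/17)) as [|Hfar]; [lra | exfalso].
    pose proof (energy_gt_of_near_pole k P Hk Hs) as Hgt.
    rewrite Hweight in Hgt by lia; lra.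
  - intros i Hi; apply norm2_stereo_lt; [apply Hs; lia | lra |].
    destruct (Rlt_or_le (pz (P i)) (5/13)) as [|Hfar]; [lra | exfalso].
    pose proof (Hclosest i Hi).
    pose proof (energy_gt_of_two_near_pole k P i Hk Hs Hi) as Hgt.
    rewrite !Hweight in Hgt by lia; lra.
Qed.
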